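(* Let $X_1,\dots,X_n$ be a Hall–Grayson–Grossman basis of vector fields on $\mathbb{R}^n$ (for the free nilpotent Lie algebra of rank $r\ge2$ and step $s\ge2$), and let $\Psi(x)=e^{x_1X_1}\circ e^{x_2X_2}\circ\cdots\circ e^{x_nX_n}(0)$, where $e^{tX}$ denotes the flow of the vector field $X$ at time $t$. Then $\Psi(x)=x$ for all $x\in\mathbb{R}^n$.
   Context: Multi-indices $\mathbb{N}^n$: $|\alpha|$, $\alpha!$, $x^\alpha$. Hall basis of the free nilpotent Lie algebra $\mathfrak g$ (rank $r$, step $s$, dimension $n$): take a basis $X_1,\dots,X_r$ of the first layer (degree 1); inductively the degree-$d$ elements are brackets $[X_i,X_j]$ of earlier elements with $i>j$, $d(i)+d(j)=d$, and, if $X_i$ was constructed as $[X_h,X_k]$, then $k\le j$; list them after lower-degree elements. Strings: $(\ell)$ for $\ell\le r$; for $X_\ell=[X_a,X_b]$, the string of $a$ followed by $b$. With string $(\ell_0,\dots,\ell_h)$, $I(\ell)_j=\#\{1\le p\le h:\ell_p=j\}$; $j\prec\ell$ iff the string of $j$ is an initial segment of that of $\ell$. The Hall–Grayson–Grossman basis is the family of vector fields on $\mathbb{R}^n$ given by $X_i=\sum_{\ell:\,i\prec\ell}\frac{(-1)^{|I(\ell)|}}{I(\ell)!}x^{I(\ell)}\frac{\partial}{\partial x_\ell}$ for $i=1,\dots,r$, and, for $\ell>r$ with $X_\ell$ constructed in the Hall algorithm as $[X_a,X_b]$, $X_\ell=[X_a,X_b]$ (Lie bracket of vector fields). *)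

From HB Require Import structures.
From mathcomp Require Import all_boot all_order all_algebra.
From mathcomp Require Import all_classical all_reals all_analysis.
Set Implicit Arguments. Unset Strict Implicit. Unset Printing Implicit Defensive.
Import Order.TTheory GRing.Theory Num.Theory.
Import numFieldNormedType.Exports.
Local Open Scope ring_scope.

(* Conventions: indices are 0-based.  The paper's X_1..X_n are our X_0..X_{n-1};
   generators (first layer) are the indices 0..r-1.  For an index l >= r, the
   Hall algorithm constructed X_l = [X_(a l), X_(b l)]. *)

Fixpoint hdeg_fuel (r : nat) (a b : nat -> nat) (fuel l : nat) : nat :=
  match fuel with
  | 0 => 1
  | fuel'.+1 => if (l < r)%N then 1
                else (hdeg_fuel r a b fuel' (a l) + hdeg_fuel r a b fuel' (b l))%N
  end.
Definition hdeg r a b l := hdeg_fuel r a b l.+1 l.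

Fixpoint hstring_fuel (r : nat) (a b : nat -> nat) (fuel l : nat) : seq nat :=
  match fuel with
  | 0 => [:: l]
  | fuel'.+1 => if (l < r)%N then [:: l]
                else rcons (hstring_fuel r a b fuel' (a l)) (b l)
  end.
Definition hstring r a b l := hstring_fuel r a b l.+1 l.

Definition is_hall_basis (r s n : nat) (a b : nat -> nat) : Prop :=
  [/\ [/\ (2 <= r)%N, (2 <= s)%N & (r <= n)%N],
      (* brackets of earlier elements, i > j, Hall condition k <= j *)
      (forall l, (r <= l < n)%N ->
         [/\ (b l < a l)%N, (a l < l)%N & ((r <= a l)%N -> (b (a l) <= b l)%N)]),
      (forall i j, (i <= j < n)%N -> (hdeg r a b i <= hdeg r a b j)%N) /\
      (forall l, (l < n)%N -> (hdeg r a b l <= s)%N),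
      (* each admissible bracket is constructed exactly once *)
      (forall l l', (r <= l < n)%N -> (r <= l' < n)%N ->
         a l = a l' -> b l = b l' -> l = l') &
      (forall i j, (j < i < n)%N -> (hdeg r a b i + hdeg r a b j <= s)%N ->
         ((r <= i)%N -> (b i <= j)%N) ->
         exists l, [/\ (r <= l < n)%N, a l = i & b l = j])].

Section Fields.
Variable R : realType.
Variable n : nat.

Definition vfield := 'rV[R]_n -> 'rV[R]_n.

Definition coord (x : 'rV[R]_n) (p : nat) : R :=
  oapp (fun j : 'I_n => x ord0 j) 0 (insub p).

Definition lie_bracket (X Y : vfield) : vfield :=
  fun x => derive Y x (X x) - derive X x (Y x).

Variables (r : nat) (a b : nat -> nat).

(* I(l) is the multiset of the entries l_1..l_h of the string of l *)
Definition Iidx (l : nat) : seq nat := behead (hstring r a b l).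

Definition hgg_gen (i : nat) : vfield := fun x =>
  \row_(l < n)
    (if prefix (hstring r a b i) (hstring r a b l) then
       (-1) ^+ size (Iidx l) / ((\prod_(j < n) (count_mem (j : nat) (Iidx l))`!)%N)%:R
       * \prod_(p <- Iidx l) coord x p
     else 0).

Fixpoint hgg_fuel (fuel l : nat) : vfield :=
  match fuel with
  | 0 => hgg_gen l
  | fuel'.+1 => if (l < r)%N then hgg_gen l
                else lie_bracket (hgg_fuel fuel' (a l)) (hgg_fuel fuel' (b l))
  end.

Definition hgg (l : nat) : vfield := hgg_fuel l.+1 l.

Definition is_flow (X : vfield) (phi : R -> 'rV[R]_n -> 'rV[R]_n) : Prop :=
  forall p, phi 0 p = p /\
    forall t : R, is_derive t 1 (fun u => phi u p) (X (phi t p)).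

Definition Psi (phi : nat -> R -> 'rV[R]_n -> 'rV[R]_n) (x : 'rV[R]_n) : 'rV[R]_n :=
  foldr (fun i acc => phi i (coord x i) acc) 0 (iota 0 n).

End Fields.

From Pilot Require Import Defs.
From HB Require Import structures.
From mathcomp Require Import all_boot all_order all_algebra.
From mathcomp Require Import all_classical all_reals all_analysis.
From mathcomp Require Import ring zify.
Import Order.TTheory GRing.Theory Num.Theory.
Import numFieldNormedType.Exports.
Import Pilot.Defs.
Set Implicit Arguments. Unset Strict Implicit. Unset Printing Implicit Defensive.

(* Every X_l is a polynomial field whose m-th component only
   involves x_0, ..., x_(m-1); hence its flow exists globally (it is found
   coordinate by coordinate by integrating polynomials) and is unique.  On the
   slice {y_j = 0 for j < k} the field X_k equals the unit vector e_k: writing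
   X_l = [X_(a l), X_(b l)], the field X_(b l) is constant on the relevant
   slice, so X_l is obtained there from the generator field of the root of l
   by differentiating along the letters of I(l); a monomial x^I(m) survives
   this and the evaluation on the slice only if I(m) has the same letters as
   I(l) below l, which by Hall's conditions forces m = l.  Therefore the flow
   of X_k moves a point of the slice along y + t e_k, and composing the flows
   from the right builds x one coordinate at a time. *)

Lemma sorted_leq_filter_split (s : seq nat) k : sorted leq s ->
  s = [seq x <- s | (x < k)%N] ++ [seq x <- s | ~~ (x < k)%N].
Proof.
elim: s => //= x s IH sorted_xs.
have sorted_s : sorted leq s by move: sorted_xs; case: s {IH} => // y s /andP[].
case: ifP => xk /=; first by rewrite -IH.
have ge_x : all (leq x) s by apply: order_path_min sorted_xs; apply: leq_trans.
have not_lt y : y \in s -> ~~ (y < k)%N.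
  by move=> /(allP ge_x) xy; rewrite -leqNgt (leq_trans _ xy) // leqNgt xk.
have -> : [seq y <- s | (y < k)%N] = [::].
  by apply/eqP; rewrite -[_ == _]negbK -has_filter; apply/hasPn.
by have -> // : [seq y <- s | ~~ (y < k)%N] = s; apply/all_filterP/allP.
Qed.

Definition hroot (r : nat) (a b : nat -> nat) (l : nat) : nat :=
  head 0%N (hstring r a b l).

Section HallStrings.
Variables (r s n : nat) (a b : nat -> nat).
Hypothesis hall : is_hall_basis r s n a b.
Local Notation hs := (hstring r a b).
Local Notation I := (Iidx r a b).
Local Notation root := (hroot r a b).

Lemma hall_left_lt l : (r <= l)%N -> (l < n)%N -> (a l < l)%N.
Proof. by case: hall => _ h _ _ _ rl ln; have [] := h l; rewrite ?rl. Qed.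

Lemma hall_right_lt l : (r <= l)%N -> (l < n)%N -> (b l < a l)%N.
Proof. by case: hall => _ h _ _ _ rl ln; have [] := h l; rewrite ?rl. Qed.

Lemma hall_right_mono l : (r <= l)%N -> (l < n)%N -> (r <= a l)%N ->
  (b (a l) <= b l)%N.
Proof. by case: hall => _ h _ _ _ rl ln; have [] := h l; rewrite ?rl. Qed.

Lemma hall_left_lt_n l : (r <= l)%N -> (l < n)%N -> (a l < n)%N.
Proof. by move=> rl ln; exact: ltn_trans (hall_left_lt rl ln) ln. Qed.

Lemma hall_right_lt_n l : (r <= l)%N -> (l < n)%N -> (b l < n)%N.
Proof.
by move=> rl ln; exact: ltn_trans (hall_right_lt rl ln) (hall_left_lt_n rl ln).
Qed.

Lemma hstring_fuel_stable f1 f2 l : (l < n)%N -> (l < f1)%N -> (l < f2)%N ->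
  hstring_fuel r a b f1 l = hstring_fuel r a b f2 l.
Proof.
elim: f1 f2 l => [//|f1 IH] [//|f2] l ln l1 l2 /=.
case: ifP => // /negbT; rewrite -leqNgt => rl.
have al := hall_left_lt rl ln.
by rewrite (IH f2) ?(hall_left_lt_n rl ln) ?(leq_trans al).
Qed.

Lemma hstring_gen l : (l < r)%N -> hs l = [:: l].
Proof. by rewrite /hstring /= => ->. Qed.

Lemma hstring_bracket l : (r <= l)%N -> (l < n)%N ->
  hs l = rcons (hs (a l)) (b l).
Proof.
move=> rl ln; rewrite /hstring /= ltnNge rl /=.
have al := hall_left_lt rl ln.
by rewrite (@hstring_fuel_stable l (a l).+1) ?(hall_left_lt_n rl ln).
Qed.

Lemma hstring_cons l : (l < n)%N -> hs l = root l :: I l.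
Proof.
elim/ltn_ind: l => l IH ln; case: (ltnP l r) => [lr | rl].
  by rewrite /hroot /Iidx hstring_gen.
rewrite /hroot /Iidx hstring_bracket //.
by rewrite (IH _ (hall_left_lt rl ln) (hall_left_lt_n rl ln)).
Qed.

Lemma Iidx_gen l : (l < r)%N -> I l = [::].
Proof. by move=> lr; rewrite /Iidx hstring_gen. Qed.

Lemma Iidx_bracket l : (r <= l)%N -> (l < n)%N -> I l = rcons (I (a l)) (b l).
Proof.
move=> rl ln; rewrite /Iidx hstring_bracket //.
by rewrite (hstring_cons (hall_left_lt_n rl ln)).
Qed.

Lemma hroot_bracket l : (r <= l)%N -> (l < n)%N -> root l = root (a l).
Proof.
move=> rl ln; rewrite /hroot hstring_bracket //.
by rewrite (hstring_cons (hall_left_lt_n rl ln)).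
Qed.

Lemma Iidx_lt l : (l < n)%N -> all (fun j => j < l)%N (I l).
Proof.
elim/ltn_ind: l => l IH ln; case: (ltnP l r) => [lr | rl].
  by rewrite Iidx_gen.
have al := hall_left_lt rl ln.
rewrite Iidx_bracket // all_rcons (ltn_trans (hall_right_lt rl ln) al) /=.
apply: sub_all (IH _ al (hall_left_lt_n rl ln)) => j /= ja.
exact: ltn_trans al.
Qed.

Lemma Iidx_sorted l : (l < n)%N -> sorted leq (I l).
Proof.
elim/ltn_ind: l => l IH ln; case: (ltnP l r) => [lr | rl].
  by rewrite Iidx_gen.
have al := hall_left_lt rl ln; have an := hall_left_lt_n rl ln.
rewrite Iidx_bracket //; case: (ltnP (a l) r) => [alr | ral].
  by rewrite Iidx_gen.
have := IH _ al an; rewrite Iidx_bracket // => sorted_a.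
rewrite -!cats1 -catA sorted_cat_cons /= andbT sorted_a.
exact: hall_right_mono.
Qed.

Lemma hstring_inj l l' : (l < n)%N -> (l' < n)%N -> hs l = hs l' -> l = l'.
Proof.
elim/ltn_ind: l l' => l IH l' ln ln'.
case: (ltnP l r) => [lr | rl]; case: (ltnP l' r) => [lr' | rl'].
- by rewrite !hstring_gen // => -[].
- rewrite (hstring_gen lr) (hstring_bracket rl' ln').
  rewrite (hstring_cons (hall_left_lt_n rl' ln')).
  by move=> -[_] /(congr1 size); rewrite size_rcons.
- rewrite (hstring_gen lr') (hstring_bracket rl ln).
  rewrite (hstring_cons (hall_left_lt_n rl ln)).
  by move=> -[_] /(congr1 size); rewrite size_rcons.
rewrite (hstring_bracket rl ln) (hstring_bracket rl' ln') => /rcons_inj[/IH eq_a eq_b].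
case: hall => _ _ _ inj _; apply: inj; rewrite ?rl ?ln ?rl' ?ln' //.
exact: eq_a (hall_left_lt rl ln) (hall_left_lt_n rl ln) (hall_left_lt_n rl' ln').
Qed.

Lemma hstring_extension_lt m l x t : (m < n)%N -> (l < n)%N ->
  hs m = hs l ++ x :: t -> (x < l)%N.
Proof.
elim/ltn_ind: m t => m IH t mn ln.
case: (ltnP m r) => [mr | rm].
  by rewrite hstring_gen // (hstring_cons ln) => -[_]; case: (I l).
rewrite hstring_bracket //; case/lastP: t => [|t y].
  rewrite cats1 => /rcons_inj[/(hstring_inj (hall_left_lt_n rm mn) ln) <- <-].
  exact: hall_right_lt.
rewrite -rcons_cons -rcons_cat => /rcons_inj[+ _].
exact: IH (hall_left_lt rm mn) t (hall_left_lt_n rm mn) ln.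
Qed.

(* Both being sorted, the letters of I(m) below l are exactly I(l), so the
   string of m is that of l followed by letters >= l; but a proper extension
   of the string of l always starts with a letter < l. *)
Lemma hall_eq_of_count m l : (m < n)%N -> (l < n)%N -> root m = root l ->
  (forall j, (j < l)%N -> count_mem j (I m) = count_mem j (I l)) -> m = l.
Proof.
move=> mn ln eq_root same_count.
have low_Im : [seq j <- I m | (j < l)%N] = I l.
  apply: (sorted_eq leq_trans anti_leq).
  - exact: sorted_filter leq_trans _ _ (Iidx_sorted mn).
  - exact: Iidx_sorted ln.
  apply/allP => j _; apply/eqP; rewrite count_filter.
  case: (ltnP j l) => [jl | lj].
    rewrite -same_count //; apply: eq_count => y /=.
    by case: eqP => // ->; rewrite jl.
  rewrite (@eq_count _ _ pred0) ?count_pred0; last first.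
    by move=> y /=; case: eqP => // ->; rewrite ltnNge lj.
  apply/esym/count_memPn; apply: contraTN lj => /(allP (Iidx_lt ln)).
  by rewrite -ltnNge.
have ext : hs m = hs l ++ [seq j <- I m | ~~ (j < l)%N].
  rewrite (hstring_cons mn) (hstring_cons ln) eq_root /=.
  by rewrite {1}(sorted_leq_filter_split l (Iidx_sorted mn)) low_Im.
case E : [seq j <- I m | ~~ (j < l)%N] ext => [|x t] ext.
  by apply: hstring_inj; rewrite // ext cats0.
have : x \in [seq j <- I m | ~~ (j < l)%N] by rewrite E mem_head.
by rewrite mem_filter (hstring_extension_lt mn ln ext).
Qed.

End HallStrings.

Local Open Scope ring_scope.

Section PolyExpr.
Variables (R : realType) (n : nat).
Local Notation V := 'rV[R]_n.

Lemma coordE (x : V) (j : 'I_n) : coord x j = x ord0 j.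
Proof. by rewrite /coord valK. Qed.

Lemma coord_out (x : V) p : (n <= p)%N -> coord x p = 0.
Proof. by move=> np; rewrite /coord insubF // ltnNge np. Qed.

Lemma coord0 j : coord (0 : V) j = 0.
Proof.
case: (ltnP j n) => jn; last exact: coord_out.
by rewrite (coordE _ (Ordinal jn)) mxE.
Qed.

Lemma coordDZ (h : R) (v z : V) j :
  coord (h *: v + z) j = h * coord v j + coord z j.
Proof.
case: (ltnP j n) => jn; last by rewrite !coord_out // mulr0 addr0.
by rewrite !(coordE _ (Ordinal jn)) !mxE.
Qed.

Definition evec (p : nat) : V := \row_(j < n) ((j : nat) == p)%:R.

Lemma coord_evec p q : coord (evec p) q = ((q == p) && (q < n)%N)%:R.
Proof.
case: (ltnP q n) => qn; last by rewrite coord_out // andbF.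
by rewrite (coordE _ (Ordinal qn)) mxE andbT.
Qed.

Definition vanish_below (k : nat) (y : V) := forall j, (j < k)%N -> coord y j = 0.

Lemma vanish_belowDZ k {h : R} (v z : V) :
  vanish_below k v -> vanish_below k z -> vanish_below k (h *: v + z).
Proof. by move=> vk zk j jk; rewrite coordDZ vk // zk // mulr0 addr0. Qed.

Lemma vanish_below_evec k p : (k <= p)%N -> vanish_below k (evec p).
Proof.
move=> kp j jk; rewrite coord_evec.
by case: eqP => [jp|//]; move: jk; rewrite jp ltnNge kp.
Qed.

Lemma vanish_below0 k : vanish_below k 0.
Proof. by move=> j _; rewrite coord0. Qed.

Lemma vanish_below_le k k' (y : V) :
  (k' <= k)%N -> vanish_below k y -> vanish_below k' y.
Proof. by move=> k'k yk j jk'; apply: yk; apply: leq_trans jk' k'k. Qed.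

Lemma derive_eq_on_slice (W : normedModType R) k (f g : V -> W) (z v : V) :
  (forall y, vanish_below k y -> f y = g y) ->
  vanish_below k z -> vanish_below k v -> derive f z v = derive g z v.
Proof.
move=> eq_fg zk vk; rewrite /derive.
have on_line (h : R) : f (h *: v + z) = g (h *: v + z).
  by apply: eq_fg; apply: vanish_belowDZ.
suff -> : (fun h : R => h^-1 *: ((f \o shift z) (h *: v) - f z)) =
          (fun h : R => h^-1 *: ((g \o shift z) (h *: v) - g z)) by [].
by apply/funext => h /=; rewrite on_line eq_fg.
Qed.

Inductive pexpr :=
  | PConst of R
  | PVar of nat
  | PAdd of pexpr & pexpr
  | PMul of pexpr & pexpr.

Fixpoint peval (e : pexpr) (x : V) : R :=
  match e with
  | PConst c => c
  | PVar p => coord x p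
  | PAdd e1 e2 => peval e1 x + peval e2 x
  | PMul e1 e2 => peval e1 x * peval e2 x
  end.

Fixpoint pderiv (p : nat) (e : pexpr) : pexpr :=
  match e with
  | PConst _ => PConst 0
  | PVar q => PConst (q == p)%:R
  | PAdd e1 e2 => PAdd (pderiv p e1) (pderiv p e2)
  | PMul e1 e2 => PAdd (PMul (pderiv p e1) e2) (PMul e1 (pderiv p e2))
  end.

Fixpoint pvars_lt (k : nat) (e : pexpr) : bool :=
  match e with
  | PConst _ => true
  | PVar q => (q < k)%N
  | PAdd e1 e2 | PMul e1 e2 => pvars_lt k e1 && pvars_lt k e2
  end.

Lemma peval_eq_below k e (x y : V) : pvars_lt k e ->
  (forall j, (j < k)%N -> coord x j = coord y j) -> peval e x = peval e y.
Proof.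
move=> ek eq_xy; elim: e ek => [c|q|e1 IH1 e2 IH2|e1 IH1 e2 IH2] //=;
  by [apply: eq_xy | move=> /andP[/IH1 -> /IH2 ->]].
Qed.

Lemma pvars_lt_pderiv k p e : pvars_lt k e -> pvars_lt k (pderiv p e).
Proof.
by elim: e => [c|q|e1 IH1 e2 IH2|e1 IH1 e2 IH2] //= /andP[h1 h2];
  rewrite ?h1 ?h2 IH1 // IH2.
Qed.

Lemma pvars_lt_le k k' e : (k <= k')%N -> pvars_lt k e -> pvars_lt k' e.
Proof.
move=> kk'; elim: e => [c|q|e1 IH1 e2 IH2|e1 IH1 e2 IH2] //=;
  by [move=> /leq_trans; apply | move=> /andP[/IH1 -> /IH2 ->]].
Qed.

Lemma peval_pderiv_ge k p e (x : V) : pvars_lt k e -> (k <= p)%N ->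
  peval (pderiv p e) x = 0.
Proof.
move=> ek kp; elim: e ek => [c|q|e1 IH1 e2 IH2|e1 IH1 e2 IH2] //=.
- by move=> qk; case: eqP => // qp; move: qk; rewrite qp ltnNge kp.
- by move=> /andP[/IH1 -> /IH2 ->]; rewrite addr0.
- by move=> /andP[/IH1 -> /IH2 ->]; rewrite mul0r mulr0 addr0.
Qed.

Lemma is_derive_coord (x v : V) (q : nat) :
  is_derive x v (fun y => coord y q) (coord v q).
Proof.
case: (ltnP q n) => qn; last first.
  rewrite coord_out // (_ : (fun y => coord y q) = cst 0); first exact: is_derive_cst.
  by apply/funext => y; rewrite coord_out.
pose j := Ordinal qn.
have -> : (fun y : V => coord y q) = (fun y : V => y ord0 j).
  by apply/funext => y; rewrite (coordE y j).
have dI := @derivable_id _ V x v.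
have Dj : v ord0 j = 'D_v (fun y : V => id y ord0 j) x.
  have := derive_mx dI => /(congr1 (fun M : 'M[R]_(1, n) => M ord0 j)) /=.
  by rewrite mxE derive_id.
apply: DeriveDef; first by move/derivable_mxP: dI; apply.
by rewrite -Dj (coordE v j).
Qed.

Lemma sum_coord_eq (v : V) (q : nat) :
  \sum_(p < n) coord v p * (q == p)%:R = coord v q.
Proof.
case: (ltnP q n) => qn.
  rewrite (bigD1 (Ordinal qn)) //= eqxx mulr1 big1 ?addr0 // => p /eqP pq.
  by case: eqP => [qp|]; [case: pq; apply: val_inj | rewrite mulr0].
rewrite coord_out // big1 // => p _; case: eqP => [qp|]; last by rewrite mulr0.
by move: (ltn_ord p); rewrite -qp ltnNge qn.
Qed.

Lemma peval_is_derive e (x v : V) :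
  is_derive x v (peval e) (\sum_(p < n) coord v p * peval (pderiv p e) x).
Proof.
elim: e => [c|q|e1 IH1 e2 IH2|e1 IH1 e2 IH2].
- rewrite big1 => [|p _]; last by rewrite mulr0.
  by rewrite (_ : peval (PConst c) = cst c) //; exact: is_derive_cst.
- by rewrite sum_coord_eq; exact: is_derive_coord.
- rewrite (_ : peval (PAdd e1 e2) = peval e1 + peval e2) //.
  by apply: is_derive_eq; rewrite -big_split; apply: eq_bigr => p _; rewrite mulrDr.
- rewrite (_ : peval (PMul e1 e2) = peval e1 * peval e2) //.
  apply: is_derive_eq; rewrite /GRing.scale /= !mulr_sumr -big_split /=.
  by apply: eq_bigr => p _; ring.
Qed.

#[global] Existing Instance peval_is_derive.

Definition pfield (E : nat -> pexpr) : V -> V := fun x => \row_(m < n) peval (E m) x.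

Lemma pfield_is_derive E (x v : V) : is_derive x v (pfield E)
  (\row_(m < n) \sum_(p < n) coord v p * peval (pderiv p (E m)) x).
Proof.
have Ej (i : 'I_1) (j : 'I_n) : (fun y => pfield E y i j) = peval (E j).
  by apply/funext => y; rewrite mxE.
have dv : derivable (pfield E) x v.
  by apply/derivable_mxP => i j; rewrite Ej; exact: ex_derive.
apply: DeriveDef => //; rewrite derive_mx //.
by apply/matrixP => i j; rewrite !mxE Ej; exact: derive_val.
Qed.

#[global] Existing Instance pfield_is_derive.

Definition triangular (E : nat -> pexpr) := forall m, (m < n)%N -> pvars_lt m (E m).

Lemma pfield_vanish_below E k (z : V) : triangular E ->
  vanish_below k z -> vanish_below k (pfield E 0) -> vanish_below k (pfield E z).
Proof.
move=> trE zk E0k j jk; have [jn|nj] := ltnP j n; last exact: coord_out.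
rewrite -(E0k j jk) !(coordE _ (Ordinal jn)) !mxE.
apply: peval_eq_below (trE _ jn) _ => i ij.
by rewrite zk ?coord0 //; apply: ltn_trans ij jk.
Qed.

Fixpoint psum (f : nat -> pexpr) (m : nat) : pexpr :=
  if m is m'.+1 then PAdd (psum f m') (f m') else PConst 0.

Lemma peval_psum f m x : peval (psum f m) x = \sum_(p < m) peval (f p) x.
Proof. by elim: m => [|m IH] /=; rewrite ?big_ord0 // big_ord_recr /= IH. Qed.

Lemma pvars_lt_psum k f m : (forall p, (p < m)%N -> pvars_lt k (f p)) ->
  pvars_lt k (psum f m).
Proof.
elim: m => [|m IH] //= fk.
by rewrite fk // IH // => p pm; apply: fk; apply: ltnW.
Qed.

(* The sums stop at [m]: for triangular fields the derivatives along x_p,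
   p >= m, of the m-th components vanish, and dropping them keeps the
   bracket syntactically triangular. *)
Definition pbracket (A B : nat -> pexpr) (m : nat) : pexpr :=
  PAdd (psum (fun p => PMul (A p) (pderiv p (B m))) m)
       (PMul (PConst (-1)) (psum (fun p => PMul (B p) (pderiv p (A m))) m)).

Lemma sum_pfield_pderiv (A B : nat -> pexpr) (x : V) (m : 'I_n) :
  pvars_lt m (B m) ->
  \sum_(p < n) coord (pfield A x) p * peval (pderiv p (B m)) x =
  \sum_(p < m) peval (A p) x * peval (pderiv p (B m)) x.
Proof.
move=> Bm; have mn : (m <= n)%N := ltnW (ltn_ord m).
rewrite (big_ord_widen n (fun p => peval (A p) x * peval (pderiv p (B m)) x) mn).
rewrite [RHS]big_mkcond /=; apply: eq_bigr => p _; case: ifP => [pm|/negbT]; last first.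
  by rewrite -leqNgt => mp; rewrite (peval_pderiv_ge _ Bm mp) mulr0.
by rewrite (coordE _ p) mxE.
Qed.

Lemma lie_bracket_pfield A B : triangular A -> triangular B ->
  lie_bracket (pfield A) (pfield B) = pfield (pbracket A B).
Proof.
move=> trA trB; apply/funext => x; rewrite /lie_bracket !derive_val.
apply/matrixP => i m; rewrite !mxE /= !peval_psum mulN1r.
by rewrite !sum_pfield_pderiv ?trA ?trB.
Qed.

Lemma triangular_pbracket A B : triangular A -> triangular B ->
  triangular (pbracket A B).
Proof.
move=> trA trB m mn.
have low C p : triangular C -> (p < m)%N -> pvars_lt m (C p).
  by move=> trC pm; apply: pvars_lt_le (ltnW pm) (trC _ (ltn_trans pm mn)).
by rewrite /= !pvars_lt_psum // => p pm /=; rewrite low ?pvars_lt_pderiv ?trA ?trB.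
Qed.

End PolyExpr.

Arguments evec {R n}.

Section Monomials.
Variables (R : realType) (n : nat).
Local Notation V := 'rV[R]_n.

Definition pmonomial (s : seq nat) : pexpr R :=
  foldr (fun p e => PMul (PVar R p) e) (PConst 1) s.

Lemma peval_pmonomial s (x : V) : peval (pmonomial s) x = \prod_(p <- s) coord x p.
Proof. by elim: s => [|p s IH] /=; rewrite ?big_nil ?big_cons ?IH. Qed.

Lemma pvars_lt_pmonomial k s :
  all (fun p => p < k)%N s -> pvars_lt k (pmonomial s).
Proof. by elim: s => //= p s IH /andP[-> /IH]. Qed.

Lemma peval_pderiv_pmonomial p s (x : V) :
  peval (pderiv p (pmonomial s)) x =
  (count_mem p s)%:R * \prod_(q <- rem p s) coord x q.
Proof.
elim: s => [|q s IH] /=; first by rewrite mul0r.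
rewrite IH peval_pmonomial; case: eqP => [->|qp] /=; last first.
  by rewrite mul0r add0r big_cons add0n mulrCA.
rewrite mul1r natrD mulrDl mul1r; congr (_ + _).
have [ps|ps] := boolP (p \in s); last by rewrite (count_memPn ps) !mul0r mulr0.
by rewrite [in RHS](big_rem _ ps) /= mulrCA.
Qed.

(* [cM = (c, s)] stands for the monomial c * x^s, the exponent being given as
   the multiset s of indices. *)
Definition mono_eval (cM : R * seq nat) (x : V) : R :=
  cM.1 * \prod_(p <- cM.2) coord x p.

Definition mono_field (cM : nat -> R * seq nat) : V -> V :=
  pfield (fun m => PMul (PConst (cM m).1) (pmonomial (cM m).2)).

Lemma mono_fieldE cM (x : V) :
  mono_field cM x = \row_(m < n) mono_eval (cM m) x.
Proof. by apply/matrixP => i j; rewrite !mxE /= peval_pmonomial. Qed.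

Definition mono_step (p : nat) (cM : R * seq nat) : R * seq nat :=
  (- (cM.1 * (count_mem p cM.2)%:R), rem p cM.2).

Definition mono_steps (L : seq nat) (cM : R * seq nat) : R * seq nat :=
  foldl (fun cM p => mono_step p cM) cM L.

Lemma derive_mono_field cM (z : V) p : (p < n)%N ->
  derive (mono_field cM) z (evec p) = - mono_field (mono_step p \o cM) z.
Proof.
move=> pn; rewrite derive_val !mono_fieldE; apply/matrixP => i m; rewrite !mxE.
rewrite (bigD1 (Ordinal pn)) //= coord_evec eqxx pn mul1r big1 ?addr0; last first.
  move=> q /eqP qp; rewrite coord_evec; case: eqP => [e|]; last by rewrite mul0r.
  by case: qp; apply: val_inj.
by rewrite /mono_eval /= mul0r add0r peval_pderiv_pmonomial mulrA mulNr opprK.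
Qed.

Lemma mono_steps_coef0 L s : (mono_steps L (0, s)).1 = 0.
Proof.
by rewrite /mono_steps; elim: L s => //= p L IH s; rewrite /mono_step /= mul0r oppr0.
Qed.

Lemma mono_steps_vanish (y : V) l L c s : vanish_below l y ->
  (exists2 j, (j < l)%N & count_mem j s <> count_mem j L) ->
  mono_eval (mono_steps L (c, s)) y = 0.
Proof.
rewrite /mono_steps => yl; elim: L c s => [|x L IH] c s /= [j jl cnt_j].
  have js : j \in s by rewrite -has_pred1 has_count lt0n; apply/eqP.
  by rewrite /mono_eval (big_rem _ js) /= yl // mul0r mulr0.
have [xs|/count_memPn cnt_x] := boolP (x \in s); last first.
  rewrite /mono_eval /mono_step /= cnt_x mulr0 oppr0 -/mono_steps.
  by rewrite mono_steps_coef0 mul0r.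
apply: IH; exists j => //; rewrite /mono_step /= count_mem_rem.
have : (0 < count_mem x s)%N by rewrite -has_count has_pred1.
by move: cnt_j; case: eqP => [<-|_] /=; lia.
Qed.

Lemma prod_fact_count_cons x s : (x < n)%N ->
  (\prod_(j < n) (count_mem (j : nat) (x :: s))`!)%N =
  ((count_mem x s).+1 * \prod_(j < n) (count_mem (j : nat) s)`!)%N.
Proof.
move=> xn; rewrite (bigD1 (Ordinal xn)) //= [in RHS](bigD1 (Ordinal xn)) //=.
rewrite eqxx add1n factS mulnA; congr (_ * _)%N; apply: eq_bigr => j /eqP ne.
by rewrite /= (_ : (x == j) = false) //; apply/eqP => xj; case: ne; apply: val_inj.
Qed.

Lemma mono_steps_self c L : all (fun p => p < n)%N L ->
  mono_steps L (c, L) =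
  (c * (-1) ^+ size L * ((\prod_(j < n) (count_mem (j : nat) L)`!)%N)%:R, [::]).
Proof.
rewrite /mono_steps; elim: L c => [|x L IH] c /=.
  by rewrite expr0 mulr1 big1 ?mulr1.
move=> /andP[xn Ln]; rewrite /mono_step /= eqxx add1n IH //.
rewrite prod_fact_count_cons // natrM exprS; congr pair; ring.
Qed.

End Monomials.

Section TriangularFlow.
Variables (R : realType) (n : nat).
Local Notation V := 'rV[R]_n.

Fixpoint pexpr_poly (e : pexpr R) (qs : nat -> {poly R}) : {poly R} :=
  match e with
  | PConst c => c%:P
  | PVar p => if (p < n)%N then qs p else 0
  | PAdd e1 e2 => pexpr_poly e1 qs + pexpr_poly e2 qs
  | PMul e1 e2 => pexpr_poly e1 qs * pexpr_poly e2 qs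
  end.

Lemma horner_pexpr_poly e qs (t : R) :
  (pexpr_poly e qs).[t] = peval e (\row_(j < n) (qs j).[t] : V).
Proof.
elim: e => [c|p|e1 IH1 e2 IH2|e1 IH1 e2 IH2] /=.
- by rewrite hornerC.
- case: (ltnP p n) => pn; last by rewrite coord_out // horner0.
  by rewrite (coordE _ (Ordinal pn)) mxE.
- by rewrite hornerD IH1 IH2.
- by rewrite hornerM IH1 IH2.
Qed.

Lemma pexpr_poly_eq_below k e qs qs' : pvars_lt k e ->
  (forall j, (j < k)%N -> qs j = qs' j) -> pexpr_poly e qs = pexpr_poly e qs'.
Proof.
move=> ek eq_qs; elim: e ek => [c|p|e1 IH1 e2 IH2|e1 IH1 e2 IH2] //=;
  by [move=> pk; rewrite eq_qs | move=> /andP[/IH1 -> /IH2 ->]].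
Qed.

Definition poly_primitive (P : {poly R}) : {poly R} :=
  \poly_(i < (size P).+1) (if i is i'.+1 then P`_i' / i'.+1%:R else 0).

Lemma deriv_poly_primitive P : (poly_primitive P)^`() = P.
Proof.
apply/polyP => i; rewrite coef_deriv coef_poly ltnS.
case: ltnP => iP; last by rewrite nth_default // mul0rn.
by rewrite /= -(mulr_natr (P`_i / _)) divfK // pnatr_eq0.
Qed.

Lemma horner0_poly_primitive P : (poly_primitive P).[0] = 0.
Proof. by rewrite horner_coef0 coef_poly. Qed.

Variable E : nat -> pexpr R.
Hypothesis trE : triangular n E.

(* The flow is polynomial in t: its j-th coordinate is x0_j plus the
   primitive of the j-th component evaluated along the lower coordinates,
   which are already known. *)
Fixpoint flow_polys (x0 : V) (k : nat) : seq {poly R} :=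
  if k is k'.+1 then
    rcons (flow_polys x0 k')
      ((coord x0 k')%:P +
       poly_primitive (pexpr_poly (E k') (nth 0 (flow_polys x0 k'))))
  else [::].

Lemma size_flow_polys x0 k : size (flow_polys x0 k) = k.
Proof. by elim: k => //= k IH; rewrite size_rcons IH. Qed.

Lemma nth_flow_polys x0 j k : (j < k)%N ->
  nth 0 (flow_polys x0 k) j = nth 0 (flow_polys x0 j.+1) j.
Proof.
elim: k => // k IH; rewrite ltnS leq_eqVlt => /orP[/eqP -> //|jk].
by rewrite /= nth_rcons size_flow_polys jk IH.
Qed.

Definition flow_poly x0 j := nth 0 (flow_polys x0 j.+1) j.

Lemma flow_polyE x0 j : (j < n)%N ->
  flow_poly x0 j =
  (coord x0 j)%:P + poly_primitive (pexpr_poly (E j) (flow_poly x0)).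
Proof.
move=> jn; rewrite /flow_poly /= nth_rcons size_flow_polys ltnn eqxx.
congr (_ + poly_primitive _); apply: (pexpr_poly_eq_below (trE jn)) => i ij.
by rewrite nth_flow_polys.
Qed.

Definition triangular_flow (t : R) (x0 : V) : V :=
  \row_(j < n) (flow_poly x0 j).[t].

Lemma triangular_flow_is_flow : is_flow (pfield E) triangular_flow.
Proof.
move=> x0; split.
  apply/matrixP => i j; rewrite mxE (flow_polyE _ (ltn_ord j)) hornerD hornerC.
  by rewrite horner0_poly_primitive addr0 (coordE _ j) (ord1 i).
move=> t.
have Ej (i : 'I_1) (j : 'I_n) :
  (fun u => triangular_flow u x0 i j) = horner (flow_poly x0 j).
  by apply/funext => u; rewrite mxE.
have dv : derivable (fun u => triangular_flow u x0) t 1.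
  by apply/derivable_mxP => i j; rewrite Ej; exact: derivable_horner.
apply: DeriveDef => //; rewrite derive_mx //; apply/matrixP => i j; rewrite !mxE Ej.
rewrite derive_val (flow_polyE _ (ltn_ord j)) derivD derivC add0r.
rewrite deriv_poly_primitive horner_pexpr_poly.
by congr peval; apply/matrixP => i' j'; rewrite !mxE.
Qed.

(* Uniqueness of integral curves, coordinate by coordinate: each coordinate
   has a derivative determined by the lower ones. *)
Lemma triangular_flow_line phi (q : V) k : is_flow (pfield E) phi ->
  (forall t, pfield E (q + t *: evec k) = evec k) ->
  forall t, phi t q = q + t *: evec k.
Proof.
move=> flow_phi on_line.
suff eq_coord m : (m < n)%N ->
    forall t, coord (phi t q) m = coord (q + t *: evec k) m.
  by move=> t; apply/matrixP => i j; rewrite (ord1 i) -!coordE; exact: eq_coord.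
elim/ltn_ind: m => m IH mn t; pose j := Ordinal mn; pose c : R := evec k ord0 j.
have phi_j_derive (u : R) : is_derive u 1 (fun u : R => phi u q ord0 j) c.
  have [du Du] := (proj2 (flow_phi q)) u.
  apply: DeriveDef; first by move/derivable_mxP: du; apply.
  have := derive_mx du; rewrite Du => /(congr1 (fun M : 'M[R]_(1, n) => M ord0 j)).
  rewrite [in RHS]mxE => <-.
  transitivity (pfield E (q + u *: evec k) ord0 j); last by rewrite on_line.
  rewrite !mxE; apply: peval_eq_below (trE mn) _ => i im.
  exact: IH (ltn_trans im mn) _.
have diff_cst (u : R) :
    is_derive u 1 ((fun u => phi u q ord0 j) - horner (c *: 'X)) 0.
  by apply: is_derive_eq; rewrite derivZ derivX hornerZ hornerC mulr1 subrr.
have : phi t q ord0 j - (c *: 'X).[t] = phi 0 q ord0 j - (c *: 'X).[0].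
  exact: is_derive_0_is_cst diff_cst.
rewrite !hornerZ !hornerX mulr0 subr0 (proj1 (flow_phi q)) => eq_t.
rewrite (coordE _ j) (coordE _ j) mxE [X in _ + X]mxE -/c.
by rewrite -eq_t; ring.
Qed.

End TriangularFlow.

Section Tails.
Variables (R : realType) (n : nat).
Local Notation V := 'rV[R]_n.

Definition tail_vec (x : V) (k : nat) : V :=
  \row_(j < n) (if (k <= j)%N then x ord0 j else 0).

Lemma foldr_tail_vec (F : nat -> V -> V) (x : V) d : (d <= n)%N ->
  (forall i, (i < n)%N -> F i (tail_vec x i.+1) = tail_vec x i) ->
  foldr F 0 (iota (n - d) d) = tail_vec x (n - d).
Proof.
move=> dn step; elim: d dn => [|d IH] dn.
  by rewrite subn0; apply/matrixP => i j; rewrite !mxE leqNgt ltn_ord.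
have Sd : (n - d.+1).+1 = (n - d)%N by rewrite subnSK.
by rewrite /= Sd IH ?(ltnW dn) // -Sd step // -subn_gt0 subKn.
Qed.

End Tails.

Section HallFields.
Variable R : realType.
Variables (r s n : nat) (a b : nat -> nat).
Hypothesis hall : is_hall_basis r s n a b.
Local Notation V := 'rV[R]_n.
Local Notation X := (@hgg R n r a b).
Local Notation hs := (hstring r a b).
Local Notation I := (Iidx r a b).
Local Notation root := (hroot r a b).

Lemma hgg_fuel_succ f l : @hgg_fuel R n r a b f.+1 l =
  if (l < r)%N then @hgg_gen R n r a b l
  else lie_bracket (@hgg_fuel R n r a b f (a l)) (@hgg_fuel R n r a b f (b l)).
Proof. by []. Qed.

Lemma hgg_fuel_stable f1 f2 l : (l < n)%N -> (l < f1)%N -> (l < f2)%N ->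
  @hgg_fuel R n r a b f1 l = @hgg_fuel R n r a b f2 l.
Proof.
elim: f1 f2 l => [//|f1 IH] [//|f2] l ln l1 l2; rewrite !hgg_fuel_succ.
case: ifP => [//|/negbT]; rewrite -leqNgt => rl.
have al := hall_left_lt hall rl ln; have bl := hall_right_lt hall rl ln.
have an := hall_left_lt_n hall rl ln; have bn := hall_right_lt_n hall rl ln.
have al1 : (a l < f1)%N := leq_trans al l1.
have al2 : (a l < f2)%N := leq_trans al l2.
rewrite (IH f2 (a l) an al1 al2).
rewrite (IH f2 (b l) bn (ltn_trans bl al1) (ltn_trans bl al2)).
reflexivity.
Qed.

Lemma hgg_gen_eq l : (l < r)%N -> X l = @hgg_gen R n r a b l.
Proof. by move=> lr; rewrite /hgg hgg_fuel_succ lr. Qed.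

Lemma hgg_bracket l : (r <= l)%N -> (l < n)%N ->
  X l = lie_bracket (X (a l)) (X (b l)).
Proof.
move=> rl ln; rewrite /hgg hgg_fuel_succ ifN -?leqNgt //.
have al := hall_left_lt hall rl ln.
have bl := ltn_trans (hall_right_lt hall rl ln) al.
rewrite (@hgg_fuel_stable l (a l).+1 (a l) (hall_left_lt_n hall rl ln) al (ltnSn _)).
rewrite (@hgg_fuel_stable l (b l).+1 (b l) (hall_right_lt_n hall rl ln) bl (ltnSn _)).
reflexivity.
Qed.

Definition gen_coef (g m : nat) : R :=
  if prefix [:: g] (hs m) then
    (-1) ^+ size (I m) / ((\prod_(j < n) (count_mem (j : nat) (I m))`!)%N)%:R
  else 0.

Lemma hgg_gen_mono g :
  (g < r)%N -> X g = mono_field (fun m => (gen_coef g m, I m)).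
Proof.
move=> gr; rewrite hgg_gen_eq //; apply/funext => x; rewrite mono_fieldE.
apply/matrixP => i m; rewrite !mxE /mono_eval /gen_coef hstring_gen //=.
by case: ifP; rewrite ?mul0r.
Qed.

Lemma hgg_triangular l : (l < n)%N -> exists2 E, X l = pfield E & triangular n E.
Proof.
elim/ltn_ind: l => l IH ln; case: (ltnP l r) => [lr | rl].
  exists (fun m => PMul (PConst (gen_coef l m)) (pmonomial R (I m))).
    exact: hgg_gen_mono.
  by move=> m mn; rewrite /= pvars_lt_pmonomial ?(Iidx_lt hall mn).
have al := hall_left_lt hall rl ln; have bl := hall_right_lt hall rl ln.
have [A eq_A trA] := IH _ al (hall_left_lt_n hall rl ln).
have [B eq_B trB] := IH _ (ltn_trans bl al) (hall_right_lt_n hall rl ln).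
exists (pbracket A B); last exact: triangular_pbracket.
by rewrite hgg_bracket // eq_A eq_B lie_bracket_pfield.
Qed.

(* On the slice {y_j = 0 for j < b l}, the m-th component of X_l is the
   monomial [hgg_mono l m]: that of the generator field of the root of l,
   differentiated successively along the letters of I(l). *)
Definition hgg_mono (l m : nat) : R * seq nat :=
  mono_steps (I l) (gen_coef (root l) m, I m).

Lemma hgg_mono_bracket l : (r <= l)%N -> (l < n)%N ->
  hgg_mono l = mono_step (b l) \o hgg_mono (a l).
Proof.
move=> rl ln; apply/funext => m.
rewrite /hgg_mono /mono_steps (Iidx_bracket hall rl ln) foldl_rcons.
by rewrite (hroot_bracket hall rl ln).
Qed.

Lemma hgg_mono_eval l m (y : V) : (l < n)%N -> (m < n)%N -> vanish_below l y ->
  mono_eval (hgg_mono l m) y = (m == l)%:R.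
Proof.
move=> ln mn yl; have root_l : prefix [:: root l] (hs l).
  by rewrite (hstring_cons hall ln) prefix_cons eqxx prefix0s.
rewrite /hgg_mono; case root_m : (prefix [:: root l] (hs m)); last first.
  rewrite /mono_eval /gen_coef root_m mono_steps_coef0 mul0r.
  by case: eqP => // ml; move: root_m; rewrite ml root_l.
have eq_root : root m = root l.
  by move: root_m; rewrite (hstring_cons hall mn) prefix_cons => /andP[/eqP].
have [/existsP[j /eqP cnt_j] | /existsPn same_cnt] :=
  boolP [exists j : 'I_l, count_mem (j : nat) (I m) != count_mem (j : nat) (I l)].
  rewrite (mono_steps_vanish _ yl); last by exists j.
  by case: eqP => // ml; case: cnt_j; rewrite ml.
have -> : m = l.
  apply: (hall_eq_of_count hall mn ln eq_root) => j jl.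
  by apply/eqP; have := same_cnt (Ordinal jl); rewrite negbK.
rewrite (mono_steps_self (n := n)); last first.
  by apply: sub_all (Iidx_lt hall ln) => j /ltn_trans; apply.
rewrite /mono_eval /= big_nil mulr1 eqxx /gen_coef root_l mulrAC divfK.
  by rewrite -exprD -signr_odd oddD addbb.
by rewrite pnatr_eq0 -lt0n prodn_gt0 // => j; rewrite fact_gt0.
Qed.

Definition hgg_agrees_mono l := forall y : V,
  vanish_below (if (l < r)%N then 0%N else b l) y ->
  X l y = mono_field (hgg_mono l) y.

Lemma hgg_evec_of_mono l (y : V) : (l < n)%N -> hgg_agrees_mono l ->
  vanish_below l y -> X l y = evec l.
Proof.
move=> ln agree yl; rewrite agree; last first.
  apply: vanish_below_le yl; case: ifP => // /negbT; rewrite -leqNgt => rl.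
  exact: ltnW (ltn_trans (hall_right_lt hall rl ln) (hall_left_lt hall rl ln)).
by rewrite mono_fieldE; apply/matrixP => i m; rewrite !mxE hgg_mono_eval.
Qed.

(* On the slice {y_j = 0 for j < b l} the field X_(b l) is constant, so only
   the term -DX_(a l).X_(b l) of the bracket survives. *)
Lemma hgg_agrees_mono_all l : (l < n)%N -> hgg_agrees_mono l.
Proof.
elim/ltn_ind: l => l IH ln z.
case: (ltnP l r) => [lr _ | rl zb].
  by rewrite hgg_gen_mono // /hgg_mono /hroot Iidx_gen // hstring_gen.
have al := hall_left_lt hall rl ln; have an := hall_left_lt_n hall rl ln.
have bl := ltn_trans (hall_right_lt hall rl ln) al.
have bn := hall_right_lt_n hall rl ln.
have evec_b y : vanish_below (b l) y -> X (b l) y = evec (b l).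
  exact: hgg_evec_of_mono bn (IH _ bl bn).
have Xa_zb : vanish_below (b l) (X (a l) z).
  have [A eq_A trA] := hgg_triangular an.
  have Xa0 : X (a l) 0 = evec (a l).
    by apply: hgg_evec_of_mono an (IH _ al an) _; exact: vanish_below0.
  rewrite eq_A; apply: pfield_vanish_below => //; rewrite -eq_A Xa0.
  exact: vanish_below_evec (ltnW (hall_right_lt hall rl ln)).
have cut_a : ((if (a l < r)%N then 0 else b (a l)) <= b l)%N.
  case: ifP => // /negbT; rewrite -leqNgt; exact: (hall_right_mono hall rl ln).
have Db : derive (X (b l)) z (X (a l) z) = 0.
  by rewrite (derive_eq_on_slice (g := cst (evec (b l))) evec_b) ?derive_cst.
have Da : derive (X (a l)) z (evec (b l)) = - mono_field (hgg_mono l) z.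
  rewrite (derive_eq_on_slice (IH _ al an) (vanish_below_le cut_a zb));
    last exact: vanish_below_evec cut_a.
  by rewrite derive_mono_field // (hgg_mono_bracket rl ln).
by rewrite hgg_bracket // /lie_bracket evec_b // Db Da sub0r opprK.
Qed.

Lemma hgg_slice_evec l (y : V) :
  (l < n)%N -> vanish_below l y -> X l y = evec l.
Proof. by move=> ln; apply: hgg_evec_of_mono ln (hgg_agrees_mono_all ln). Qed.

Lemma hgg_flow_tail phi (x : V) k : (k < n)%N -> is_flow (X k) phi ->
  phi (coord x k) (tail_vec x k.+1) = tail_vec x k.
Proof.
move=> kn; have [E eq_E trE] := hgg_triangular kn; rewrite eq_E => flow_phi.
have tail_k : vanish_below k (tail_vec x k.+1).
  move=> j jk; rewrite (coordE _ (Ordinal (ltn_trans jk kn))) mxE ifF //.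
  by apply/negbTE; rewrite -ltnNge ltnS ltnW.
rewrite (triangular_flow_line (k := k) trE flow_phi) => [|t].
  apply/matrixP => i j; rewrite (ord1 i) !mxE (coordE _ (Ordinal kn)).
  case: (ltngtP k j) => [kj|jk|kj]; rewrite ?mulr0 ?addr0 //.
  by rewrite mulr1 add0r; congr (x _ _); apply: val_inj.
rewrite -eq_E addrC; apply: hgg_slice_evec => //.
by apply: vanish_belowDZ => //; apply: vanish_below_evec.
Qed.

End HallFields.

Theorem proposition3p5 (R : realType) (r s n : nat) (a b : nat -> nat) :
  is_hall_basis r s n a b ->
  (forall i, (i < n)%N ->
     exists phi : R -> 'rV[R]_n -> 'rV[R]_n, is_flow (@hgg R n r a b i) phi) /\
  (forall phi : nat -> R -> 'rV[R]_n -> 'rV[R]_n,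
     (forall i, (i < n)%N -> is_flow (@hgg R n r a b i) (phi i)) ->
     forall x : 'rV[R]_n, Psi phi x = x).
Proof.
move=> hall; split=> [i iN | phi flow_phi x].
  have [E -> trE] := hgg_triangular R hall iN.
  by exists (triangular_flow E); exact: triangular_flow_is_flow.
have -> : Psi phi x = foldr (fun i => phi i (coord x i)) 0 (iota (n - n) n).
  by rewrite subnn.
rewrite (foldr_tail_vec (x := x)) // => [|i iN].
  by rewrite subnn; apply/matrixP => i j; rewrite (ord1 i) mxE.
exact: (hgg_flow_tail hall x iN (flow_phi i iN)).
Qed.
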